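(* For all integers $s\ge1$ and $k\ge2$, the polynomial $F_{s,k}(x)$ is divisible (in $\mathbb{Q}[x]$) by $\prod_{p=k}^{s}(x-p)$, where the empty product (when $k>s$) equals $1$.
   Context: For an integer $j\ge0$, $\binom{x}{j}=x(x-1)\cdots(x-j+1)/j!$ as a polynomial in $x$, and $\binom{x}{j}=0$ for $j<0$. For integers $s\ge1$, $k\ge1$, the Moser polynomial is $F_{s,k}(x)=\sum_{p=1}^{s}(-1)^{p-1}p^{k-1}\binom{x}{s-p}$. *)

From HB Require Import structures.
From mathcomp Require Import all_boot all_order all_algebra.
Set Implicit Arguments. Unset Strict Implicit. Unset Printing Implicit Defensive.
Import GRing.Theory Num.Theory.
Local Open Scope ring_scope.

Definition binom_poly (j : nat) : {poly rat} :=
  (j`!%:R)^-1 *: \prod_(i < j) ('X - (i%:R)%:P).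

Definition binom_polyz (j : int) : {poly rat} :=
  match j with
  | Posz n => binom_poly n
  | Negz _ => 0
  end.

Definition moser_poly (s k : nat) : {poly rat} :=
  \sum_(1 <= p < s.+1)
     ((-1) ^+ (p - 1)%N * (p%:R) ^+ (k - 1)%N) *:
       binom_polyz (s%:Z - p%:Z).

From HB Require Import structures.
From mathcomp Require Import all_boot all_order all_algebra.
From mathcomp Require Import ring zify.
Import GRing.Theory Num.Theory.
Local Open Scope ring_scope.

(* Each p with k <= p <= s is a root of F_{s,k}, and these roots are distinct.
   At x = m the binomials become 'C(m, s - p); substituting i = s - p turns
   F_{s,k}(m) into +-sum_i (-1)^i 'C(m, i) (s - i)^(k-1), the m-th finite
   difference of the polynomial (s - x)^(k-1) at 0, which vanishes because
   k - 1 < m. *)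

Lemma prod_natr_sub_ffact (R : nzRingType) (m n : nat) :
  \prod_(i < n) (m%:R - i%:R : R) = (m ^_ n)%:R.
Proof.
elim: n => [|n IHn]; first by rewrite big_ord0 ffactn0.
rewrite big_ord_recr /= IHn ffactnSr.
have [le_nm | lt_mn] := leqP n m; first by rewrite natrM natrB.
by rewrite ffact_small // mul0r mul0n.
Qed.

Lemma horner_binom_poly (n m : nat) : (binom_poly n).[m%:R] = 'C(m, n)%:R.
Proof.
rewrite /binom_poly hornerZ horner_prod.
under eq_bigr do rewrite hornerXsubC.
rewrite prod_natr_sub_ffact -bin_ffact natrM mulrC -mulrA mulfV ?mulr1 //.
by rewrite pnatr_eq0 -lt0n fact_gt0.
Qed.

Section FiniteDifferences.

Context {R : idomainType}.

Definition alt_binom_sum (m : nat) (f : nat -> R) :=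
  \sum_(i < m.+1) (-1) ^+ i * 'C(m, i)%:R * f i.

Lemma eq_alt_binom_sum (m : nat) (f g : nat -> R) :
  f =1 g -> alt_binom_sum m f = alt_binom_sum m g.
Proof. by move=> eq_fg; apply: eq_bigr => i _; rewrite eq_fg. Qed.

Lemma alt_binom_sum_widen (m n : nat) (f : nat -> R) : (m <= n)%N ->
  \sum_(0 <= i < n.+1) (-1) ^+ i * 'C(m, i)%:R * f i = alt_binom_sum m f.
Proof.
move=> le_mn; rewrite /alt_binom_sum big_mkord.
rewrite (big_ord_widen _ (fun i => (-1) ^+ i * 'C(m, i)%:R * f i) (le_mn : m.+1 <= n.+1)%N).
rewrite [RHS]big_mkcond /=.
apply: eq_bigr => i _; case: ltnP => // lt_mi.
by rewrite bin_small // mulr0 mul0r.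
Qed.

Lemma alt_binom_sumS (m : nat) (f : nat -> R) :
  alt_binom_sum m.+1 f = alt_binom_sum m f - alt_binom_sum m (fun i => f i.+1).
Proof.
rewrite /alt_binom_sum big_ord_recl [in RHS]big_ord_recl /= !bin0 !expr0 !mul1r.
rewrite -addrA; congr (_ + _).
under eq_bigr => i _ do
  rewrite /bump /= binS natrD exprS !mulN1r mulrDr mulrDl mulNr mulNr.
rewrite big_split /= big_ord_recr /= bin_small // mulr0 mul0r oppr0 addr0.
congr (_ + _).
  by apply: eq_bigr => i _; rewrite /bump /= exprS mulN1r !mulNr add1n.
by rewrite -sumrN; apply: eq_bigr => i _; rewrite add1n !mulNr.
Qed.

(* The difference q(x) - q(x+1) drops the degree: the leading terms cancel. *)
Lemma size_sub_comp_XaddC (q : {poly R}) (m : nat) :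
  (size q <= m.+1)%N -> (size (q - (q \Po ('X + 1)))%R <= m)%N.
Proof.
have size_X1 : size ('X + 1 : {poly R}) = 2%N by rewrite -polyC1 size_XaddC.
have size_comp : size (q \Po ('X + 1)) = size q by rewrite size_comp_poly2.
move=> le_qm; apply/leq_sizeP => j le_mj; rewrite coefB.
have [lt_mq | le_qm'] := ltnP m (size q); last first.
  by rewrite !nth_default ?subrr // ?size_comp (leq_trans le_qm').
have size_q : size q = m.+1 by apply/eqP; rewrite eqn_leq le_qm lt_mq.
move: le_mj; rewrite leq_eqVlt => /orP [/eqP <- | lt_mj].
  have lead_comp : lead_coef (q \Po ('X + 1)) = lead_coef q.
    by rewrite lead_coef_comp ?size_X1 // -polyC1 lead_coefXaddC expr1n mulr1.
  by move: lead_comp; rewrite !lead_coefE size_comp size_q => ->; rewrite subrr.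
by rewrite !nth_default ?subrr // ?size_comp size_q.
Qed.

Lemma alt_binom_sum_horner (m : nat) (q : {poly R}) :
  (size q <= m)%N -> alt_binom_sum m (fun i => q.[i%:R]) = 0.
Proof.
elim: m q => [|m IHm] q le_qm.
  move: le_qm; rewrite size_poly_leq0 => /eqP ->.
  by rewrite /alt_binom_sum big_ord1 horner0 mulr0.
rewrite alt_binom_sumS -(IHm _ (size_sub_comp_XaddC _ _ le_qm)) /alt_binom_sum -sumrB.
apply: eq_bigr => i _.
by rewrite hornerD hornerN horner_comp !hornerE -natr1 mulrBr.
Qed.

End FiniteDifferences.

Lemma horner_moser_poly_nat (s k m : nat) :
  (moser_poly s k).[m%:R] =
  \sum_(1 <= p < s.+1) (-1) ^+ (p - 1) * p%:R ^+ (k - 1) * 'C(m, s - p)%:R.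
Proof.
rewrite /moser_poly horner_sum; apply: eq_big_nat => p /andP [_ le_ps].
by rewrite hornerZ subzn // /binom_polyz horner_binom_poly.
Qed.

Lemma sign_sub_pred (R : pzRingType) (s i : nat) : (i < s)%N ->
  (-1) ^+ (s - i.+1) = (-1) ^+ s.+1 * (-1) ^+ i :> R.
Proof.
move=> lt_is; have e : (s.+1 + i = (s - i.+1) + (i.+1).*2)%N by lia.
by rewrite -exprD e exprD -mul2n exprM sqrrN expr1n expr1n mulr1.
Qed.

Lemma horner_moser_poly_alt (s k m : nat) : (1 < k)%N -> (m <= s)%N ->
  (moser_poly s k).[m%:R] =
  (-1) ^+ s.+1 * alt_binom_sum m (fun i => (s%:R - i%:R) ^+ (k - 1)).
Proof.
move=> lt1k le_ms; have k1_neq0 : (k - 1 != 0)%N by rewrite subn_eq0 -ltnNge.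
rewrite horner_moser_poly_nat big_add1 /= big_nat_rev /=.
rewrite -(alt_binom_sum_widen _ _ _ le_ms) mulr_sumr.
rewrite [RHS]big_nat_recr //= subrr expr0n (negPf k1_neq0) !mulr0 addr0.
apply: eq_big_nat => i /andP [_ lt_is].
rewrite add0n (subnSK lt_is) subKn ?(ltnW lt_is) // -subnDA addn1 sign_sub_pred //.
by rewrite natrB ?(ltnW lt_is) //; ring.
Qed.

Lemma moser_poly_root (s k m : nat) : (1 < k)%N -> (k <= m)%N -> (m <= s)%N ->
  root (moser_poly s k) m%:R.
Proof.
move=> lt1k le_km le_ms; apply/rootP.
rewrite horner_moser_poly_alt //.
pose q : {poly rat} := ((s%:R)%:P - 'X) ^+ (k - 1).
have size_q : (size q <= m)%N.
  apply: leq_trans (size_poly_exp_leq _ _) _.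
  by rewrite -opprB size_polyN size_XsubC /= mul1n; lia.
rewrite (@eq_alt_binom_sum _ _ _ (fun i => q.[i%:R])) ?alt_binom_sum_horner ?mulr0 //.
by move=> i; rewrite horner_exp hornerD hornerN hornerC hornerX.
Qed.

Theorem mainTheorem18 (s k : nat) (hs : (1 <= s)%N) (hk : (2 <= k)%N) :
  (\prod_(k <= p < s.+1) ('X - (p%:R)%:P)) %| moser_poly s k.
Proof.
set rs := [seq (p%:R : rat) | p <- index_iota k s.+1].
have roots_rs : all (root (moser_poly s k)) rs.
  apply/allP => _ /mapP [p + ->]; rewrite mem_index_iota => /andP [le_kp lt_ps].
  exact: moser_poly_root.
have uniq_rs : uniq_roots rs.
  by rewrite uniq_rootsE map_inj_uniq ?iota_uniq // => a b /eqP; rewrite eqr_nat => /eqP.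
have [r ->] := uniq_roots_prod_XsubC roots_rs uniq_rs.
by rewrite big_map dvdp_mull.
Qed.
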